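(* Let $m\ge 1$, let $\lambda_1,\ldots,\lambda_m\in\mathbb R$ be constants, and let $S_1,\ldots,S_m:\mathbb R^m\to\mathbb R$ be smooth functions. Let $Q_{1,0},\ldots,Q_{m,0}:\mathbb R\to\mathbb R$ be smooth initial data and let $Q_\ell:\mathbb R^+_0\times\mathbb R\to\mathbb R$, $\ell=1,\ldots,m$, be the smooth solution of $$(\partial_t+\lambda_\ell\partial_x)Q_\ell=S_\ell(Q_1,\ldots,Q_m),\qquad Q_\ell(0,x)=Q_{\ell,0}(x),\qquad \ell=1,\ldots,m.$$ Fix $\alpha\in(0,1)$. For $t\ge 0$, $x\in\mathbb R$ and $k,\ell=1,\ldots,m$ define $$\xi_{\ell k}:=x-\lambda_\ell t(1-\alpha)-\lambda_k\alpha t,\qquad Q^*_{k\ell}:=Q_{k,0}(\xi_{\ell k})+\alpha t\,S_k\big(Q_{1,0}(\xi_{\ell k}),\ldots,Q_{m,0}(\xi_{\ell k})\big),$$ and $$Q^{(1)}_\ell(t,x):=Q_{\ell,0}(x-\lambda_\ell t)+\Big(1-\frac{1}{2\alpha}\Big)t\,S_\ell\big(Q_{1,0}(x-\lambda_\ell t),\ldots,Q_{m,0}(x-\lambda_\ell t)\big)+\frac{t}{2\alpha}S_\ell\big(Q^*_{1\ell},\ldots,Q^*_{m\ell}\big).$$ Then for every fixed $x$ and every $\ell=1,\ldots,m$, $Q^{(1)}_\ell(t,x)=Q_\ell(t,x)+\mathcal O(t^3)$ as $t\to0$.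
   Context: This is an approximate (''RK2'') evolution operator for a linear hyperbolic system written in characteristic variables $Q_\ell$ with constant characteristic speeds $\lambda_\ell$ and a possibly nonlinear source $S$. *)

From HB Require Import structures.
From mathcomp Require Import all_boot all_order all_algebra.
From mathcomp Require Import all_classical all_reals all_analysis.
Set Implicit Arguments. Unset Strict Implicit. Unset Printing Implicit Defensive.
Import Order.TTheory GRing.Theory Num.Theory.
Import numFieldNormedType.Exports.
Local Open Scope ring_scope.

Fixpoint Ck {R : realType} {V : normedModType R} (k : nat) (f : V -> R) : Prop :=
  match k with
  | 0 => continuous f
  | k'.+1 => (forall x, differentiable f x) /\
             (forall v : V, Ck k' (fun x => derive f x v))
  end.

Definition smooth {R : realType} {V : normedModType R} (f : V -> R) : Prop :=
  forall k, Ck k f.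

Definition is_smooth_solution {R : realType} (m : nat) (lam : 'I_m -> R)
  (S : 'I_m -> 'rV[R]_m -> R) (Q0 : 'I_m -> R -> R)
  (Q : 'I_m -> R -> R -> R) : Prop :=
  (forall l, smooth (fun p : R * R => Q l p.1 p.2)) /\
  (forall l x, Q l 0 x = Q0 l x) /\
  (forall l t x, 0 <= t ->
     derive1 (fun s => Q l s x) t + lam l * derive1 (fun y => Q l t y) x
     = S l (\row_j Q j t x)).

Definition xi {R : realType} (m : nat) (lam : 'I_m -> R) (alpha t x : R)
  (l k : 'I_m) : R :=
  x - lam l * t * (1 - alpha) - lam k * alpha * t.

Definition Qstar {R : realType} (m : nat) (lam : 'I_m -> R)
  (S : 'I_m -> 'rV[R]_m -> R) (Q0 : 'I_m -> R -> R) (alpha t x : R)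
  (k l : 'I_m) : R :=
  let z := xi lam alpha t x l k in
  Q0 k z + alpha * t * S k (\row_j Q0 j z).

Definition Q1 {R : realType} (m : nat) (lam : 'I_m -> R)
  (S : 'I_m -> 'rV[R]_m -> R) (Q0 : 'I_m -> R -> R) (alpha : R)
  (l : 'I_m) (t x : R) : R :=
  let y := x - lam l * t in
  Q0 l y + (1 - (2 * alpha)^-1) * t * S l (\row_j Q0 j y)
  + t / (2 * alpha) * S l (\row_k Qstar lam S Q0 alpha t x k l).

(* Along the l-th characteristic s |-> (s, y + s lam_l) through (t, x), with
   y = x - lam_l t, the equation reads d/ds Q_l = F(s) := S_l(Q(s, y + s lam_l)), so
   Q_l(t, x) = Q_{l,0}(y) + t F(0) + t^2/2 F'(0) + O(t^3).  The stage value Q*_{kl} is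
   an Euler step of length alpha t along the k-th characteristic from xi_{lk}, which
   meets the l-th characteristic at time alpha t; hence
   Q*_{kl} = Q_k(alpha t, y + alpha t lam_l) + O(t^2) and
   S_l(Q*_{.l}) = F(alpha t) + O(t^2) = F(0) + alpha t F'(0) + O(t^2).
   The weights 1 - 1/(2 alpha) and 1/(2 alpha) then reproduce the expansion of Q_l up
   to O(t^3).  All constants come from uniform first- and second-order Taylor bounds
   for Q and S on small balls, which C^2 regularity yields through the mean value
   theorem. *)

From HB Require Import structures.
From mathcomp Require Import all_boot all_order all_algebra.
From mathcomp Require Import all_classical all_reals all_analysis.
From mathcomp Require Import ring lra.
Import Order.TTheory GRing.Theory Num.Theory.
Import numFieldNormedType.Exports.
Set Implicit Arguments. Unset Strict Implicit. Unset Printing Implicit Defensive.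
Local Open Scope classical_set_scope.
Local Open Scope ring_scope.

Section RealLemmas.
Context {R : realType}.

Definition shrinkable (P : R -> R -> Prop) :=
  forall r r' K K', 0 < r' -> r' <= r -> K <= K' -> P r K -> P r' K'.

Lemma local_bounds_forall (I : finType) (P : I -> R -> R -> Prop) :
  (forall i, shrinkable (P i)) ->
  (forall i, exists r K, [/\ 0 < r, 0 <= K & P i r K]) ->
  exists r K, [/\ 0 < r, 0 <= K & forall i, P i r K].
Proof.
move=> Pshrink PrK.
have /choice[rK HrK] : forall i,
    exists rK : R * R, [/\ 0 < rK.1, 0 <= rK.2 & P i rK.1 rK.2].
  by move=> i; have [r [K ?]] := PrK i; exists (r, K).
have r0 i : 0 < (rK i).1 by case: (HrK i).
have K0 i : 0 <= (rK i).2 by case: (HrK i).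
have minr0 : 0 < \big[Num.min/1]_i (rK i).1 by apply/bigmin_gtP.
exists (\big[Num.min/1]_i (rK i).1), (\sum_i (rK i).2); split => // [|i].
  exact: sumr_ge0.
have [_ _ Pi] := HrK i; apply: Pshrink Pi => //; first exact: bigmin_le.
by rewrite (bigD1 i) //= lerDl sumr_ge0.
Qed.

Lemma local_bounds_and (P1 P2 : R -> R -> Prop) : shrinkable P1 -> shrinkable P2 ->
  (exists r K, [/\ 0 < r, 0 <= K & P1 r K]) ->
  (exists r K, [/\ 0 < r, 0 <= K & P2 r K]) ->
  exists r K, [/\ 0 < r, 0 <= K & P1 r K /\ P2 r K].
Proof.
move=> P1s P2s P1rK P2rK.
have [r [K [r0 K0 PrK]]] : exists r K,
    [/\ 0 < r, 0 <= K & forall b : bool, (if b then P1 else P2) r K].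
  by apply: local_bounds_forall => -[].
by exists r, K; split => //; split; [exact: (PrK true) | exact: (PrK false)].
Qed.

Lemma near0_mulr_lt (c r : R) : 0 < r ->
  exists2 delta, 0 < delta & forall t, 0 <= t <= delta -> c * t < r.
Proof.
move=> r0; have c1 : 0 < `|c| + 1 by rewrite ltr_pwDr.
exists (r / (2 * (`|c| + 1))) => [|t /andP[t0 td]]; first by rewrite divr_gt0 ?mulr_gt0.
apply: (le_lt_trans (y := (`|c| + 1) * t)).
  by rewrite ler_wpM2r //; apply: le_trans (ler_norm c) _; rewrite lerDl.
move: td; rewrite ler_pdivlMr ?mulr_gt0 // => td; nra.
Qed.

Lemma MVT_norm_le (h : R -> R) (a b B : R) : a <= b ->
  (forall x, derivable h x 1) -> (forall x, a <= x <= b -> `|'D_1 h x| <= B) ->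
  `|h b - h a| <= B * (b - a).
Proof.
move=> ab dh hB.
have hc : {within `[a, b], continuous h}.
  apply: continuous_subspaceT => x.
  by apply: differentiable_continuous; apply/derivable1_diffP.
have [c cab ->] := MVT_segment ab (fun x _ => derivableP (dh x)) hc.
rewrite normrM (ger0_norm (x := b - a)) ?subr_ge0 // ler_wpM2r ?subr_ge0 //.
by apply: hB; move: cab; rewrite in_itv.
Qed.

Lemma is_derive_mulr_cst (c s : R) : is_derive s 1 (fun th : R => th * c) c.
Proof.
have := is_deriveM (is_derive_id s 1) (is_derive_cst c s 1).
by rewrite scaler0 add0r [c *: _]mulr1.
Qed.

Lemma is_derive_sqr_half (D s : R) : is_derive s 1 (fun th : R => th ^+ 2 / 2 * D) (s * D).
Proof.
have := is_deriveM (is_derive_id s 1) (is_derive_mulr_cst (D / 2) s).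
have -> : (@id R) * (fun th => th * (D / 2)) = (fun th => th ^+ 2 / 2 * D).
  by apply: funext => th; rewrite -[LHS]/(th * (th * (D / 2))) expr2; field.
by move/is_derive_eq; apply; rewrite /GRing.scale /= mulr1 -mulrDr -splitr.
Qed.

Lemma first_order_remainder_le (g : R -> R) (c M t : R) : 0 <= t ->
  (forall th : R, derivable g th 1) ->
  (forall th, 0 <= th <= t -> `|'D_1 g th - c| <= M) ->
  `|g t - g 0 - t * c| <= M * t.
Proof.
move=> t0 dg gM.
have dh (th : R) : is_derive th 1 (fun s => g s - s * c) ('D_1 g th - c).
  by apply: is_deriveB; [exact: derivableP | exact: is_derive_mulr_cst].
have := @MVT_norm_le (fun s => g s - s * c) 0 t M t0
  (fun th => (dh th).(ex_derive)).
rewrite mul0r !subr0 (addrAC _ (- g 0)); apply => th /gM.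
by rewrite derive_val.
Qed.

Lemma second_order_remainder_le (g : R -> R) (c D K t : R) : 0 <= t -> 0 <= K ->
  (forall th : R, derivable g th 1) ->
  (forall th, 0 <= th <= t -> `|'D_1 g th - c - th * D| <= K * th ^+ 2) ->
  `|g t - g 0 - t * c - t ^+ 2 / 2 * D| <= K * t ^+ 3.
Proof.
move=> t0 K0 dg gK.
have dh (th : R) : is_derive th 1 (fun s => g s - s * c - s ^+ 2 / 2 * D)
    ('D_1 g th - c - th * D).
  apply: is_deriveB; last exact: is_derive_sqr_half.
  by apply: is_deriveB; [exact: derivableP | exact: is_derive_mulr_cst].
have := @MVT_norm_le (fun s => g s - s * c - s ^+ 2 / 2 * D) 0 t (K * t ^+ 2)
  t0 (fun th => (dh th).(ex_derive)).
rewrite expr0n /= !mul0r !subr0 -(mulrA K) -exprSr.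
rewrite (addrAC _ (- g 0)) (addrAC _ (- g 0)); apply => th /[dup] /gK.
rewrite derive_val => /le_trans + /andP[th0 tht]; apply.
by rewrite ler_wpM2l // lerXn2r ?nnegrE.
Qed.

End RealLemmas.

Section NormedSpace.
Context {R : realType} {V : normedModType R}.
Implicit Types (f : V -> R) (a b v : V) (r K : R).

Lemma CkS_Ck (k : nat) f : Ck k.+1 f -> Ck k f.
Proof.
elim: k f => [|k IH] f [df dDf]; first by move=> x; exact: differentiable_continuous.
by split=> // v; apply: IH.
Qed.

Lemma is_derive_line f a v (s : R) :
  differentiable f (a + s *: v) ->
  is_derive s 1 (fun th => f (a + th *: v)) ('D_v f (a + s *: v)).
Proof.
move=> df.
have E : (fun h : R => h^-1 *: (((fun th => f (a + th *: v)) \o shift s) (h *: 1)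
                                 - f (a + s *: v)))
       = (fun h => h^-1 *: ((f \o shift (a + s *: v)) (h *: v) - f (a + s *: v))).
  apply: funext => h /=; congr (_ *: (f _ - _)).
  by rewrite -[h%:A]/(h * 1) mulr1 scalerDl addrCA.
split; first by rewrite /derivable E; exact: diff_derivable.
by rewrite /derive E.
Qed.

Lemma ball_convex a b (p0 : V) r (th : R) : `|a - p0| < r -> `|b - p0| < r ->
  0 <= th <= 1 -> `|a + th *: (b - a) - p0| < r.
Proof.
move=> ha hb /andP[th0 th1].
have -> : b - a = (b - p0) - (a - p0) by rewrite opprB addrA subrK.
rewrite addrAC.
move: (a - p0) (b - p0) ha hb => A B hA hB.
rewrite scalerBr addrA addrAC -{1}(scale1r A) -scalerBl.
apply: le_lt_trans (ler_normD _ _) _; rewrite !normrZ !ger0_norm ?subr_ge0 //.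
have h1 : 0 <= (1 - th) * (Num.max `|A| `|B| - `|A|).
  by rewrite mulr_ge0 ?subr_ge0 ?le_max ?lexx.
have h2 : 0 <= th * (Num.max `|A| `|B| - `|B|).
  by rewrite mulr_ge0 ?subr_ge0 ?le_max ?lexx ?orbT.
have h3 : Num.max `|A| `|B| < r by rewrite gt_max hA hB.
lra.
Qed.

Definition coord_system (I : finType) (e : I -> V) (c : I -> V -> R) :=
  (forall v, v = \sum_i c i v *: e i) /\ (forall i v, `|c i v| <= `|v|).

Lemma derive_coordE (I : finType) e c f a v : @coord_system I e c ->
  differentiable f a -> 'D_v f a = \sum_i c i v * 'D_(e i) f a.
Proof.
move=> [ce _] df; rewrite deriveE // {1}(ce v) linear_sum.
by apply: eq_bigr => i _; rewrite linearZ /= deriveE.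
Qed.

Lemma derive_dirB f a u w : differentiable f a -> 'D_(u - w) f a = 'D_u f a - 'D_w f a.
Proof. by move=> df; rewrite !deriveE // linearB. Qed.

Lemma derive_dirZ f a (k : R) u : differentiable f a -> 'D_(k *: u) f a = k * 'D_u f a.
Proof. by move=> df; rewrite !deriveE // linearZ. Qed.

Definition derive_bounded_on_ball f (p0 : V) r K :=
  forall a v, `|a - p0| < r -> `|'D_v f a| <= K * `|v|.

Definition taylor1_bounded_on_ball f (p0 : V) r K :=
  forall a b, `|a - p0| < r -> `|b - p0| < r ->
    `|f b - f a - 'D_(b - a) f a| <= K * `|b - a| ^+ 2.

Lemma derive_bounded_shrinkable f (p0 : V) : shrinkable (derive_bounded_on_ball f p0).
Proof.
move=> r r' K K' r0 rr KK fK a v ha.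
by apply: le_trans (fK a v (lt_le_trans ha rr)) _; rewrite ler_wpM2r.
Qed.

Lemma taylor1_bounded_shrinkable f (p0 : V) : shrinkable (taylor1_bounded_on_ball f p0).
Proof.
move=> r r' K K' r0 rr KK fK a b ha hb.
apply: le_trans (fK a b (lt_le_trans ha rr) (lt_le_trans hb rr)) _.
by rewrite ler_wpM2r // exprn_ge0.
Qed.

Lemma lipschitz_on_ball f (p0 : V) r K a b : (forall x, differentiable f x) ->
  derive_bounded_on_ball f p0 r K -> `|a - p0| < r -> `|b - p0| < r ->
  `|f b - f a| <= K * `|b - a|.
Proof.
move=> df fK ha hb.
have dline (th : R) := is_derive_line (df (a + th *: (b - a))).
have := @MVT_norm_le R (fun th => f (a + th *: (b - a))) 0 1 (K * `|b - a|) ler01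
  (fun th => (dline th).(ex_derive)).
rewrite scale1r scale0r addr0 subrKC subr0 mulr1; apply=> th th01.
by rewrite derive_val; apply/fK/ball_convex.
Qed.

Lemma Ck1_derive_bounded (I : finType) e c f (p0 : V) :
  @coord_system I e c -> Ck 1 f ->
  exists r K, [/\ 0 < r, 0 <= K & derive_bounded_on_ball f p0 r K].
Proof.
move=> ec [df dDf].
have : \forall a \near p0, forall i, `|'D_(e i) f p0 - 'D_(e i) f a| < 1.
  by apply: filter_forall => i; exact: cvgr_dist_lt (dDf (e i) p0) _ ltr01.
move=> /nbhs_ballP[r r0 near_p0].
exists r, (\sum_i (`|'D_(e i) f p0| + 1)); split => //.
  by apply: sumr_ge0 => i _; rewrite addr_ge0.
move=> a v ha; rewrite (derive_coordE _ ec (df a)) mulr_suml.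
apply: le_trans (ler_norm_sum _ _ _) _; apply: ler_sum => i _.
rewrite normrM mulrC ler_pM // ?ec.2 //.
have : `|'D_(e i) f p0 - 'D_(e i) f a| < 1.
  by apply: near_p0; rewrite -ball_normE /ball_ /= distrC.
have := lerB_dist ('D_(e i) f a) ('D_(e i) f p0); rewrite distrC; lra.
Qed.

Lemma Ck2_taylor1_bounded (I : finType) e c f (p0 : V) :
  @coord_system I e c -> Ck 2 f ->
  exists r K, [/\ 0 < r, 0 <= K & taylor1_bounded_on_ball f p0 r K].
Proof.
move=> ec [df dDf].
have [r [L [r0 L0 DL]]] : exists r L, [/\ 0 < r, 0 <= L &
    forall i, derive_bounded_on_ball ('D_(e i) f) p0 r L].
  apply: local_bounds_forall => i; first exact: derive_bounded_shrinkable.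
  exact: Ck1_derive_bounded ec (dDf (e i)).
exists r, (#|I|%:R * L); split => //; first by rewrite mulr_ge0.
move=> a b ha hb; set D := 'D_(b - a) f a.
have dh (th : R) : is_derive th 1 (fun s => f (a + s *: (b - a)) - s * D)
    ('D_(b - a) f (a + th *: (b - a)) - D).
  by apply: is_deriveB; [exact: is_derive_line | exact: is_derive_mulr_cst].
have := @MVT_norm_le R _ 0 1 (#|I|%:R * L * `|b - a| ^+ 2) ler01
  (fun th => (dh th).(ex_derive)).
rewrite scale1r scale0r addr0 subrKC mul1r mul0r !subr0 mulr1 (addrAC (f b)).
apply=> th /andP[th0 th1]; rewrite derive_val.
set pt := a + th *: (b - a).
have hpt : `|pt - p0| < r by apply: ball_convex; rewrite ?th0.
rewrite /D (derive_coordE _ ec (df pt)) (derive_coordE _ ec (df a)) -sumrB.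
apply: le_trans (ler_norm_sum _ _ _) _.
rewrite -mulrA mulr_natl -sumr_const; apply: ler_sum => i _.
rewrite -mulrBr normrM mulrC expr2 mulrA ler_pM // ?ec.2 //.
apply: le_trans (lipschitz_on_ball (dDf (e i)).1 (DL i) ha hpt) _.
rewrite ler_wpM2l // /pt addrAC subrr add0r normrZ ger0_norm //.
by rewrite ler_piMl.
Qed.

Lemma Ck2_local_bounds (I J : finType) e c (f : J -> V -> R) (p0 : V) :
  @coord_system I e c -> (forall j, Ck 2 (f j)) ->
  exists r K, [/\ 0 < r, 0 <= K & forall j,
    derive_bounded_on_ball (f j) p0 r K /\ taylor1_bounded_on_ball (f j) p0 r K].
Proof.
move=> ec fC2; apply: local_bounds_forall => j.
  move=> r r' K K' r0 rr KK [fD fT]; split.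
    exact: derive_bounded_shrinkable r0 rr KK fD.
  exact: taylor1_bounded_shrinkable r0 rr KK fT.
apply: local_bounds_and.
- exact: derive_bounded_shrinkable.
- exact: taylor1_bounded_shrinkable.
- exact: Ck1_derive_bounded ec (CkS_Ck (fC2 j)).
- exact: Ck2_taylor1_bounded ec (fC2 j).
Qed.

Lemma taylor1_bounded_approx f (p0 : V) r K a b v (s : R) : differentiable f a ->
  derive_bounded_on_ball f p0 r K -> taylor1_bounded_on_ball f p0 r K ->
  `|a - p0| < r -> `|b - p0| < r ->
  `|f b - f a - s * 'D_v f a| <= K * (`|b - a| ^+ 2 + `|b - a - s *: v|).
Proof.
move=> df fD fT ha hb.
have -> : f b - f a - s * 'D_v f a
    = (f b - f a - 'D_(b - a) f a) + 'D_(b - a - s *: v) f a.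
  by rewrite (@derive_dirB f a (b - a) (s *: v)) // derive_dirZ // addrA subrK.
rewrite mulrDr; apply: le_trans (ler_normD _ _) _.
by apply: lerD; [exact: fT | exact: fD].
Qed.

End NormedSpace.

Section ConcreteSpaces.
Context {R : realType}.

Lemma rV_coord_system (m : nat) :
  coord_system (fun j : 'I_m => (delta_mx 0 j : 'rV[R]_m)) (fun j v => v 0 j).
Proof.
split=> [v|j v]; first by rewrite {1}(matrix_sum_delta v) big_ord1.
by rewrite [`|v|]mx_normrE; apply: le_trans (le_bigmax _ _ (ord0, j)).
Qed.

Lemma pair_coord_system :
  coord_system (fun b : bool => if b then ((1, 0) : R * R) else (0, 1))
               (fun b (v : R * R) => if b then v.1 else v.2).
Proof.
split=> [[v1 v2]|[] [v1 v2]]; last 2 first.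
- by rewrite prod_normE /= le_max lexx.
- by rewrite prod_normE /= le_max lexx orbT.
rewrite big_bool /=; apply: injective_projections => /=.
  by rewrite scaler0 addr0 -[v1%:A]/(v1 * 1) mulr1.
by rewrite scaler0 add0r -[v2%:A]/(v2 * 1) mulr1.
Qed.

Lemma rV_norm_le (m : nat) (v : 'rV[R]_m) (B : R) :
  0 <= B -> (forall j, `|v 0 j| <= B) -> `|v| <= B.
Proof.
move=> B0 vB; rewrite [`|v|]mx_normrE; apply: bigmax_le => // -[i j] _ /=.
by rewrite (ord1 i).
Qed.

Lemma pair_lineE (z lam th : R) :
  ((0, z) : R * R) + th *: (1, lam) = (th, z + th * lam).
Proof. by apply: injective_projections => //=; rewrite add0r -[th%:A]/(th * 1) mulr1. Qed.

End ConcreteSpaces.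

Section Characteristics.
Context {R : realType} {m : nat} (lam : 'I_m -> R) (S : 'I_m -> 'rV[R]_m -> R)
  (Q0 : 'I_m -> R -> R) (Q : 'I_m -> R -> R -> R).
Hypothesis solQ : is_smooth_solution lam S Q0 Q.

Local Notation q j := (fun p : R * R => Q j p.1 p.2).
Local Notation Qrow p := (\row_j Q j p.1 p.2).
Local Notation chr k z s := (((0, z) : R * R) + (s : R) *: ((1, lam k) : R * R)).

Lemma Q_differentiable j (p : R * R) : differentiable (q j) p.
Proof. by case: solQ => Qsmooth _; case: (Qsmooth j 1%N). Qed.

Lemma Q_init j (z : R) : Q j 0 z = Q0 j z.
Proof. by case: solQ => _ []. Qed.

Lemma derive1_t_dir j (s z : R) :
  derive1 (fun s => Q j s z) s = 'D_(((1, 0) : R * R)) (q j) (s, z).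
Proof.
rewrite derive1E /derive /=; do 2 f_equal; apply: funext => h /=.
by rewrite scaler0 add0r.
Qed.

Lemma derive1_x_dir j (s z : R) :
  derive1 (fun z => Q j s z) z = 'D_(((0, 1) : R * R)) (q j) (s, z).
Proof.
rewrite derive1E /derive /=; do 2 f_equal; apply: funext => h /=.
by rewrite scaler0 add0r.
Qed.

Lemma derive_dir_solution l (p : R * R) : 0 <= p.1 ->
  'D_(((1, lam l) : R * R)) (q l) p = S l (Qrow p).
Proof.
case: solQ => _ [_ pde]; case: p => s z /= s0.
rewrite (derive_coordE _ pair_coord_system (Q_differentiable l (s, z))) big_bool /=.
by rewrite mul1r -derive1_t_dir -derive1_x_dir pde.
Qed.

Lemma is_derive_characteristic l (z th : R) :
  is_derive th 1 (fun s => q l (chr l z s))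
    ('D_(((1, lam l) : R * R)) (q l) (chr l z th)).
Proof. exact/is_derive_line/Q_differentiable. Qed.

Lemma derive_characteristic l (z th : R) : 0 <= th ->
  'D_1 (fun s => q l (chr l z s)) th
  = S l (Qrow (chr l z th)).
Proof.
move=> th0; rewrite (@is_derive_characteristic l z th).(derive_val).
by rewrite derive_dir_solution // pair_lineE.
Qed.

Section LocalError.
Variables (x alpha : R) (l : 'I_m).
Hypotheses (alpha_gt0 : 0 < alpha) (alpha_le1 : alpha <= 1).
Hypothesis S_differentiable : forall k a, differentiable (S k) a.
Variables (rQ KQ rS KS : R).
Hypotheses (KQ_ge0 : 0 <= KQ) (KS_ge0 : 0 <= KS).
Hypothesis Q_bounds : forall j, derive_bounded_on_ball (q j) (0, x) rQ KQ /\
  taylor1_bounded_on_ball (q j) (0, x) rQ KQ.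
Hypothesis S_bounds : forall k, derive_bounded_on_ball (S k) (\row_j Q j 0 x) rS KS /\
  taylor1_bounded_on_ball (S k) (\row_j Q j 0 x) rS KS.

Let Lam := 1 + \sum_k `|lam k|.
Variable t : R.
Hypotheses (t_ge0 : 0 <= t) (t_le1 : t <= 1) (t_Q : Lam * t < rQ)
  (t_S : (KS + 1) * (KQ + 1) * Lam * t < rS).

Lemma lam_le_Lam k : `|lam k| <= Lam.
Proof. by rewrite /Lam (bigD1 k) //= addrCA lerDl addr_ge0 // sumr_ge0. Qed.

Lemma Lam_ge1 : 1 <= Lam.
Proof. by rewrite lerDl sumr_ge0. Qed.

Lemma Lam_ge0 : 0 <= Lam.
Proof. exact: le_trans ler01 Lam_ge1. Qed.

Lemma Lam_t_ge0 : 0 <= Lam * t.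
Proof. by rewrite mulr_ge0 // Lam_ge0. Qed.

Lemma speed_norm_le k : `|((1, lam k) : R * R)| <= Lam.
Proof. by rewrite prod_normE ge_max normr1 Lam_ge1 lam_le_Lam. Qed.

Lemma chr_dist_le k z th : 0 <= th -> `|chr k z th - (0, z)| <= Lam * th.
Proof.
move=> th0; rewrite addrC addKr normrZ ger0_norm // mulrC.
by rewrite ler_wpM2r // speed_norm_le.
Qed.

Lemma chr_near k z th : `|th| <= Lam * t -> `|z + th * lam k - x| <= Lam * t ->
  `|chr k z th - (0, x)| <= Lam * t.
Proof. by rewrite pair_lineE prod_normE /= subr0 ge_max => -> ->. Qed.

Lemma Qrow_lipschitz (p p' : R * R) :
  `|p - (0, x)| <= Lam * t -> `|p' - (0, x)| <= Lam * t ->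
  `|Qrow p' - Qrow p| <= KQ * `|p' - p|.
Proof.
move=> hp hp'; apply: rV_norm_le => [|j]; first by rewrite mulr_ge0.
rewrite !mxE; apply: lipschitz_on_ball (Q_differentiable j) (Q_bounds j).1 _ _.
  exact: le_lt_trans hp t_Q.
exact: le_lt_trans hp' t_Q.
Qed.

Lemma Qrow_near (p : R * R) : `|p - (0, x)| <= Lam * t ->
  `|Qrow p - \row_j Q j 0 x| <= KQ * (Lam * t).
Proof.
move=> hp; have h0 : `|((0, x) : R * R) - (0, x)| <= Lam * t.
  by rewrite subrr normr0 Lam_t_ge0.
by apply: le_trans (Qrow_lipschitz h0 hp) _; rewrite ler_wpM2l.
Qed.

Lemma Qrow_in_ball (p : R * R) : `|p - (0, x)| <= Lam * t ->
  `|Qrow p - \row_j Q j 0 x| < rS.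
Proof.
move=> /Qrow_near /le_lt_trans; apply; apply: le_lt_trans t_S.
rewrite -mulrA ler_wpM2r ?Lam_t_ge0 // mulrDl mul1r.
by rewrite ler_wpDl ?mulr_ge0 ?addr_ge0 ?lerDl.
Qed.

Let y := x - lam l * t.
Let cl th := chr l y th.
Let gam th := Qrow (cl th).
Let F th := S l (gam th).
Let D := 'D_(\row_j 'D_(((1, lam l) : R * R)) (q j) (cl 0)) (S l) (gam 0).
Let K1 := KS * ((KQ * Lam) ^+ 2 + KQ * Lam ^+ 2).
Let K2 := KS * (KS * KQ * Lam).

Lemma cl_near th : 0 <= th <= t -> `|cl th - (0, x)| <= Lam * t.
Proof.
move=> /andP[th0 tht]; apply: chr_near.
  by rewrite ger0_norm //; apply: le_trans tht _; rewrite ler_peMl // Lam_ge1.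
rewrite /y (_ : _ - x = lam l * (th - t)); last by ring.
rewrite normrM (ler0_norm (x := th - t)) ?subr_le0 //.
by apply: ler_pM; rewrite ?normr_ge0 ?lam_le_Lam //; lra.
Qed.

Lemma chr_xi_near k th : 0 <= th <= alpha * t ->
  `|chr k (xi lam alpha t x l k) th - (0, x)| <= Lam * t.
Proof.
move=> /andP[th0 thal]; have alt : alpha * t <= t by rewrite ler_piMl.
apply: chr_near.
  rewrite ger0_norm //; apply: le_trans (le_trans thal alt) _.
  by rewrite ler_peMl // Lam_ge1.
rewrite /xi (_ : _ - x = - (lam l * (t * (1 - alpha))) + lam k * (th - alpha * t)).
  2: by ring.
apply: le_trans (ler_normD _ _) _.
rewrite normrN !normrM (ger0_norm t_ge0) (ger0_norm (x := 1 - alpha)) ?subr_ge0 //.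
rewrite (ler0_norm (x := th - _)) ?subr_le0 //.
have p1 : 0 <= (Lam - `|lam l|) * (t * (1 - alpha)).
  by rewrite mulr_ge0 ?subr_ge0 ?lam_le_Lam ?mulr_ge0 ?subr_ge0.
have p2 : 0 <= (Lam - `|lam k|) * (alpha * t - th).
  by rewrite mulr_ge0 ?subr_ge0 ?lam_le_Lam.
have p3 : 0 <= Lam * th by rewrite mulr_ge0 ?Lam_ge0.
lra.
Qed.

Lemma K1_ge0 : 0 <= K1.
Proof. by rewrite mulr_ge0 // addr_ge0 // ?exprn_ge0 ?mulr_ge0 // Lam_ge0. Qed.

Lemma F_taylor1_le th : 0 <= th <= t -> `|F th - F 0 - th * D| <= K1 * th ^+ 2.
Proof.
move=> hth; have th0 : 0 <= th by case/andP: hth.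
have t00 : (0 : R) <= 0 <= t by rewrite lexx t_ge0.
have cl_step : cl th - cl 0 = th *: ((1, lam l) : R * R).
  by rewrite /cl scale0r addr0 addrC addKr.
have Lth0 : 0 <= Lam * th by rewrite mulr_ge0 // Lam_ge0.
have cl_dist : `|cl th - cl 0| <= Lam * th by rewrite /cl scale0r addr0 chr_dist_le.
have gam_step : `|gam th - gam 0| <= KQ * (Lam * th).
  by apply: le_trans (Qrow_lipschitz (cl_near t00) (cl_near hth)) _; rewrite ler_wpM2l.
have gam_taylor :
    `|gam th - gam 0 - th *: \row_j 'D_(((1, lam l) : R * R)) (q j) (cl 0)|
    <= KQ * (Lam * th) ^+ 2.
  apply: rV_norm_le => [|j]; first by rewrite mulr_ge0 // exprn_ge0.
  have cl_deriv : 'D_(cl th - cl 0) (q j) (cl 0)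
      = th * 'D_(((1, lam l) : R * R)) (q j) (cl 0).
    by rewrite cl_step derive_dirZ //; apply: Q_differentiable.
  rewrite !mxE -cl_deriv.
  apply: le_trans ((Q_bounds j).2 (cl 0) (cl th) (le_lt_trans (cl_near t00) t_Q)
    (le_lt_trans (cl_near hth) t_Q)) _.
  by rewrite ler_wpM2l // lerXn2r ?nnegrE.
apply: le_trans (taylor1_bounded_approx _ th (S_differentiable l _) (S_bounds l).1
  (S_bounds l).2 (Qrow_in_ball (cl_near t00)) (Qrow_in_ball (cl_near hth))) _.
rewrite /K1 -mulrA ler_wpM2l //.
have -> : ((KQ * Lam) ^+ 2 + KQ * Lam ^+ 2) * th ^+ 2
    = (KQ * (Lam * th)) ^+ 2 + KQ * (Lam * th) ^+ 2 by ring.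
apply: lerD gam_taylor; apply: lerXn2r;
  by rewrite ?nnegrE ?normr_ge0 ?mulr_ge0 ?Lam_ge0.
Qed.

Lemma Q_taylor2_le :
  `|Q l t x - Q0 l y - t * F 0 - t ^+ 2 / 2 * D| <= K1 * t ^+ 3.
Proof.
have expansion := @second_order_remainder_le R (fun s => q l (cl s)) (F 0) D K1 t
  t_ge0 K1_ge0 (fun th => (is_derive_characteristic l y th).(ex_derive)).
have gt : q l (cl t) = Q l t x by rewrite /cl pair_lineE /= /y; congr (Q l t _); ring.
have g0 : q l (cl 0) = Q0 l y by rewrite /cl scale0r addr0 /= Q_init.
rewrite -gt -g0; apply: expansion => th hth.
rewrite derive_characteristic; last by case/andP: hth.
exact: F_taylor1_le.
Qed.

Lemma alpha_t_le : 0 <= alpha * t <= t.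
Proof. by rewrite mulr_ge0 ?(ltW alpha_gt0) // ler_piMl. Qed.

Lemma Qstar_row_dist_le :
  `|\row_k Qstar lam S Q0 alpha t x k l - gam (alpha * t)| <= KS * KQ * Lam * t ^+ 2.
Proof.
have /andP[alt0 alt] := alpha_t_le.
apply: rV_norm_le => [|k]; first by rewrite !mulr_ge0 ?Lam_ge0 ?exprn_ge0.
rewrite !mxE distrC; set z := xi lam alpha t x l k.
have meet : chr k z (alpha * t) = cl (alpha * t).
  by rewrite /cl !pair_lineE /z /xi /y; congr pair; ring.
have Qs : Qstar lam S Q0 alpha t x k l
    = q k (chr k z 0) + alpha * t * S k (Qrow (chr k z 0)).
  rewrite /Qstar -/z scale0r addr0 /= Q_init; congr (_ + _ * S k _).
  by apply/matrixP => i j; rewrite !mxE Q_init.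
have z00 : (0 : R) <= 0 <= alpha * t by rewrite lexx alt0.
have Qrow_step th : 0 <= th <= alpha * t ->
    `|Qrow (chr k z th) - Qrow (chr k z 0)| <= KQ * (Lam * th).
  move=> hth.
  apply: le_trans (Qrow_lipschitz (@chr_xi_near k 0 z00) (@chr_xi_near k th hth)) _.
  by rewrite ler_wpM2l // scale0r addr0 chr_dist_le //; case/andP: hth.
have deriv_bound th : 0 <= th <= alpha * t ->
    `|'D_1 (fun s => q k (chr k z s)) th - S k (Qrow (chr k z 0))|
    <= KS * KQ * Lam * t.
  move=> hth; rewrite derive_characteristic; last by case/andP: hth.
  apply: le_trans (lipschitz_on_ball (S_differentiable k) (S_bounds k).1
    (Qrow_in_ball (@chr_xi_near k 0 z00)) (Qrow_in_ball (@chr_xi_near k th hth))) _.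
  rewrite -!mulrA ler_wpM2l //; apply: le_trans (Qrow_step th hth) _.
  rewrite ler_wpM2l // ler_wpM2l ?Lam_ge0 //.
  by case/andP: hth => _ /le_trans; apply.
have := first_order_remainder_le alt0
  (fun th => (is_derive_characteristic k z th).(ex_derive)) deriv_bound.
rewrite meet Qs opprD addrA => /le_trans; apply.
by rewrite expr2 (mulrA _ t t) ler_wpM2l ?mulr_ge0 ?Lam_ge0.
Qed.

Lemma Qstar_row_near : `|\row_k Qstar lam S Q0 alpha t x k l - \row_j Q j 0 x| < rS.
Proof.
apply: le_lt_trans (ler_distD (gam (alpha * t)) _ _) _.
apply: le_lt_trans (lerD Qstar_row_dist_le (Qrow_near (cl_near alpha_t_le))) _.
apply: le_lt_trans t_S.
have e1 : KS * KQ * Lam * t ^+ 2 <= KS * KQ * Lam * t.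
  by rewrite expr2 mulrA ler_piMr ?mulr_ge0 ?Lam_ge0.
have e2 : 0 <= KS * (Lam * t) by rewrite mulr_ge0 ?Lam_t_ge0.
have := Lam_t_ge0; nra.
Qed.

Lemma S_Qstar_dist_le :
  `|S l (\row_k Qstar lam S Q0 alpha t x k l) - F (alpha * t)| <= K2 * t ^+ 2.
Proof.
apply: le_trans (lipschitz_on_ball (S_differentiable l) (S_bounds l).1
  (Qrow_in_ball (cl_near alpha_t_le)) Qstar_row_near) _.
by rewrite /K2 -mulrA ler_wpM2l // Qstar_row_dist_le.
Qed.

Lemma Q1_error_le : `|Q1 lam S Q0 alpha l t x - Q l t x|
  <= (K1 + K2 / (2 * alpha) + K1 * alpha / 2) * t ^+ 3.
Proof.
have F0 : S l (\row_j Q0 j y) = F 0.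
  rewrite /F /gam /cl scale0r addr0; congr (S l _).
  by apply/matrixP => i j; rewrite !mxE /= Q_init.
rewrite /Q1 -/y F0; set Ss := S l _.
have c0 : 0 <= t / (2 * alpha) by rewrite divr_ge0 ?mulr_ge0 ?(ltW alpha_gt0).
have alpha_neq0 : alpha != 0 by rewrite gt_eqF.
have -> : Q0 l y + (1 - (2 * alpha)^-1) * t * F 0 + t / (2 * alpha) * Ss - Q l t x
    = - (Q l t x - Q0 l y - t * F 0 - t ^+ 2 / 2 * D)
      + t / (2 * alpha) * (Ss - F (alpha * t))
      + t / (2 * alpha) * (F (alpha * t) - F 0 - alpha * t * D) by field.
have -> : (K1 + K2 / (2 * alpha) + K1 * alpha / 2) * t ^+ 3
    = K1 * t ^+ 3 + t / (2 * alpha) * (K2 * t ^+ 2)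
      + t / (2 * alpha) * (K1 * (alpha * t) ^+ 2) by field.
apply: le_trans (ler_normD _ _) _; apply: lerD; last first.
  by rewrite normrM ger0_norm // ler_wpM2l // F_taylor1_le // alpha_t_le.
apply: le_trans (ler_normD _ _) _; rewrite normrN normrM ger0_norm //.
by apply: lerD; [exact: Q_taylor2_le | rewrite ler_wpM2l // S_Qstar_dist_le].
Qed.

End LocalError.

End Characteristics.

Theorem theorem2 (R : realType) (m : nat) (hm : (0 < m)%N)
  (lam : 'I_m -> R) (S : 'I_m -> 'rV[R]_m -> R) (Q0 : 'I_m -> R -> R)
  (Q : 'I_m -> R -> R -> R) (alpha : R) :
  (forall k, smooth (S k)) ->
  (forall l, smooth (Q0 l)) ->
  is_smooth_solution lam S Q0 Q ->
  0 < alpha < 1 ->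
  forall (x : R) (l : 'I_m),
    exists C delta : R, 0 < delta /\
      forall t : R, 0 <= t <= delta ->
        `|Q1 lam S Q0 alpha l t x - Q l t x| <= C * t ^+ 3.
Proof.
(* Smoothness of the initial data is implied by that of the solution. *)
move=> S_smooth _ solQ /andP[alpha_gt0 alpha_lt1] x l.
have [Q_smooth _] := solQ.
have [rQ [KQ [rQ_gt0 KQ_ge0 Q_bounds]]] :=
  Ck2_local_bounds ((0, x) : R * R) pair_coord_system (fun j => Q_smooth j 2%N).
have [rS [KS [rS_gt0 KS_ge0 S_bounds]]] :=
  Ck2_local_bounds (\row_j Q j 0 x) (@rV_coord_system R m)
    (fun k => S_smooth k 2%N).
set Lam := 1 + \sum_k `|lam k|.
have [d1 d1_gt0 small1] := near0_mulr_lt 1 (@ltr01 R).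
have [d2 d2_gt0 small2] := near0_mulr_lt Lam rQ_gt0.
have [d3 d3_gt0 small3] := near0_mulr_lt ((KS + 1) * (KQ + 1) * Lam) rS_gt0.
pose K1 := KS * ((KQ * Lam) ^+ 2 + KQ * Lam ^+ 2).
pose K2 := KS * (KS * KQ * Lam).
exists (K1 + K2 / (2 * alpha) + K1 * alpha / 2), (Num.min d1 (Num.min d2 d3)).
split => [|t /andP[t_ge0]].
  by rewrite !lt_min d1_gt0 d2_gt0 d3_gt0.
rewrite !le_min => /and3P[td1 td2 td3].
have S_diff k : forall a, differentiable (S k) a by case: (S_smooth k 1%N).
apply: (Q1_error_le solQ l alpha_gt0 (ltW alpha_lt1) S_diff KQ_ge0 KS_ge0
  Q_bounds S_bounds t_ge0).
- by apply: ltW; rewrite -[t]mul1r small1 ?t_ge0.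
- by rewrite small2 ?t_ge0.
- by rewrite small3 ?t_ge0.
Qed.
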